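(* Let $P_1,\dots,P_n\subset\mathbb R^n$ be polytopes. The following are equivalent: (1) the Cayley polytope $\mathcal C(P_1,\dots,P_n)$ is a fully mixed $(2n-1)$-dimensional simplex; (2) $P_1,\dots,P_n$ are segments with linearly independent directions.
   Context: The Cayley polytope $\mathcal C(P_1,\dots,P_n)$ is the convex hull in $\mathbb R^n\times\mathbb R^n$ of $\bigcup_{i=1}^nP_i\times\{e_i\}$, with $e_1,\dots,e_n$ the standard basis of the second factor $\mathbb R^n$; it is called fully mixed if $\dim P_i\ge1$ for all $i$. A segment is a polytope of dimension exactly 1. *)

From mathcomp Require Import all_boot all_order all_algebra.
Set Implicit Arguments. Unset Strict Implicit. Unset Printing Implicit Defensive.
Import Order.TTheory GRing.Theory Num.Theory.
Local Open Scope ring_scope.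

Section Geometry.
Variable R : realFieldType.

Definition set_eqv (m : nat) (A B : 'rV[R]_m -> Prop) : Prop :=
  forall x, A x <-> B x.

Definition conv (m : nat) (S : 'rV[R]_m -> Prop) : 'rV[R]_m -> Prop :=
  fun x => exists (k : nat) (c : 'I_k -> R) (p : 'I_k -> 'rV[R]_m),
    [/\ forall i, 0 <= c i, \sum_i c i = 1, forall i, S (p i)
      & x = \sum_i c i *: p i].

Definition polytope (m : nat) (P : 'rV[R]_m -> Prop) : Prop :=
  exists V : seq 'rV[R]_m, V != [::] /\ set_eqv P (conv (fun x => x \in V)).

Definition aff_indep (m k : nat) (p : 'I_k -> 'rV[R]_m) : Prop :=
  forall c : 'I_k -> R, \sum_i c i = 0 -> \sum_i c i *: p i = 0 ->
    forall i, c i = 0.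

Definition adim (m : nat) (P : 'rV[R]_m -> Prop) (d : nat) : Prop :=
  (exists p : 'I_d.+1 -> 'rV[R]_m, (forall i, P (p i)) /\ aff_indep p) /\
  (forall p : 'I_d.+2 -> 'rV[R]_m, (forall i, P (p i)) -> ~ aff_indep p).

Definition segment (m : nat) (P : 'rV[R]_m -> Prop) : Prop :=
  polytope P /\ adim P 1.

Definition simplex (m d : nat) (C : 'rV[R]_m -> Prop) : Prop :=
  exists p : 'I_d.+1 -> 'rV[R]_m,
    aff_indep p /\ set_eqv C (conv (fun x => exists i, x = p i)).

Definition std_basis (n : nat) (i : 'I_n) : 'rV[R]_n := delta_mx 0 i.

Definition cayley (n : nat) (P : 'I_n -> 'rV[R]_n -> Prop) : 'rV[R]_(n + n) -> Prop :=
  conv (fun z => exists (i : 'I_n) (x : 'rV[R]_n),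
                   P i x /\ z = row_mx x (std_basis i)).

Definition fully_mixed (n : nat) (P : 'I_n -> 'rV[R]_n -> Prop) : Prop :=
  forall i, exists d, (1 <= d)%N /\ adim (P i) d.

End Geometry.

(* If P_i = [a_i, b_i], an affine relation among the 2n points (a_i, e_i),
   (b_i, e_i) has opposite coefficients at (a_i, e_i) and (b_i, e_i) (read off
   the e_i-coordinate), so it reduces to a linear relation among the
   directions b_i - a_i; hence C is the simplex on these points exactly when
   the directions are independent.  Conversely, the vertices of a simplex are
   extreme points of it, so each of the 2n vertices of C is a generator
   (x, e_i) with x in P_i, and the e_i-coordinate shows that P_i is the convex
   hull of the vertices lying over e_i.  Full mixedness puts at least two
   vertices over each e_i, hence exactly two, so P_i is the segment joining
   them. *)
From mathcomp Require Import all_boot all_order all_algebra ring.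
Set Implicit Arguments. Unset Strict Implicit. Unset Printing Implicit Defensive.
Import Order.TTheory GRing.Theory Num.Theory.
Local Open Scope ring_scope.

Lemma split_lshift m n (i : 'I_m) : split (lshift n i) = inl i.
Proof. exact: (unsplitK (inl _ i)). Qed.

Lemma split_rshift m n (i : 'I_n) : split (rshift m i) = inr i.
Proof. exact: (unsplitK (inr _ i)). Qed.

Lemma sum_row_mx (R : pzRingType) n1 n2 (I : Type) (r : seq I) (c : I -> R)
    (u : I -> 'rV[R]_n1) (v : I -> 'rV[R]_n2) :
  \sum_(i <- r) c i *: row_mx (u i) (v i) =
  row_mx (\sum_(i <- r) c i *: u i) (\sum_(i <- r) c i *: v i).
Proof.
elim/big_rec3: _ => [|i y1 y2 y3 _ ->]; first by rewrite row_mx0.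
by rewrite scale_row_mx add_row_mx.
Qed.

Lemma sumr_delta (R : pzRingType) (V : lmodType R) (I : finType) (i : I)
    (F : I -> V) :
  \sum_j (j == i)%:R *: F j = F i.
Proof.
by rewrite (bigD1 i) //= eqxx scale1r big1 ?addr0 // => j /negbTE->; rewrite scale0r.
Qed.

Lemma sumr_delta1 (R : pzRingType) (I : finType) (i : I) :
  \sum_j (j == i)%:R = 1 :> R.
Proof. by rewrite (bigD1 i) //= eqxx big1 ?addr0 // => j /negbTE->. Qed.

Lemma sumr_eq1_exists_neq0 (R : nzRingType) (I : finType) (w : I -> R) :
  \sum_i w i = 1 -> exists i, w i != 0.
Proof.
move=> w1; apply/existsP; rewrite -negb_forall; apply: contra_eqN w1 => /forallP w0.
by rewrite big1 1?eq_sym ?oner_neq0 // => i _; apply/eqP.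
Qed.

Section Convexity.
Variables (R : realFieldType) (m : nat).
Implicit Types (S T P Q : 'rV[R]_m -> Prop) (a b x y : 'rV[R]_m).

Lemma mem_conv S x : S x -> conv S x.
Proof.
move=> Sx; exists 1%N, (fun=> 1), (fun=> x).
by split; rewrite ?big_ord1 ?scale1r.
Qed.

Lemma conv_sub S T : (forall y, S y -> T y) -> forall x, conv S x -> conv T x.
Proof.
by move=> ST _ [k [c [p [c0 c1 Sp ->]]]]; exists k, c, p; split => // i; apply: ST.
Qed.

Lemma conv_support S k (w : 'I_k -> R) (q : 'I_k -> 'rV[R]_m) :
  (forall l, 0 <= w l) -> \sum_l w l = 1 -> (forall l, w l != 0 -> S (q l)) ->
  conv S (\sum_l w l *: q l).
Proof.
move=> w0 w1 Sq; have [l0 wl0] := sumr_eq1_exists_neq0 w1.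
exists k, w, (fun l => if w l == 0 then q l0 else q l); split => //.
  by move=> l; case: eqP => [_|/eqP]; apply: Sq.
by apply: eq_bigr => l _; case: eqP => // ->; rewrite !scale0r.
Qed.

Lemma conv_range_weights N (q : 'I_N -> 'rV[R]_m) x :
  conv (fun y => exists j, y = q j) x ->
  exists w : 'I_N -> R,
    [/\ forall j, 0 <= w j, \sum_j w j = 1 & x = \sum_j w j *: q j].
Proof.
move=> [k [c [p [c0 c1 Sp ->]]]]; have [f pf] := fin_all_exists Sp.
exists (fun j => \sum_(l | f l == j) c l); split.
- by move=> j; apply: sumr_ge0.
- by rewrite -c1 (partition_big f predT).
- rewrite (partition_big f predT) //=; apply: eq_bigr => j _.
  by rewrite scaler_suml; apply: eq_bigr => l /eqP <-; rewrite pf.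
Qed.

Lemma conv_convex S x y t :
  conv S x -> conv S y -> 0 <= t <= 1 -> conv S (t *: x + (1 - t) *: y).
Proof.
move=> [k1 [c [p [c0 c1 Sp ->]]]] [k2 [d [q [d0 d1 Sq ->]]]] /andP[t0 t1].
pose e i := match split i with inl a => t * c a | inr b => (1 - t) * d b end.
pose r i := match split i with inl a => p a | inr b => q b end.
exists (k1 + k2)%N, e, r; split.
- by move=> i; rewrite /e; case: split => a; rewrite mulr_ge0 ?subr_ge0.
- rewrite big_split_ord /e.
  under eq_bigr => i _ do rewrite split_lshift.
  under [X in _ + X = 1]eq_bigr => i _ do rewrite split_rshift.
  by rewrite -!mulr_sumr c1 d1 !mulr1 addrC subrK.
- by move=> i; rewrite /r; case: split.
- rewrite big_split_ord !scaler_sumr; congr (_ + _); apply: eq_bigr => i _;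
    by rewrite /e /r ?split_lshift ?split_rshift scalerA.
Qed.

Lemma conv_idem S T x : (forall y, S y -> conv T y) -> conv S x -> conv T x.
Proof.
move=> ST [k [c [p [c0 c1 Sp ->]]]].
have {Sp ST}Tp i : conv T (p i) by apply: ST.
elim: k c p c0 c1 Tp => [|k IHk] c p c0 c1 Tp.
  by move: c1; rewrite big_ord0 => /eqP; rewrite eq_sym oner_eq0.
rewrite big_ord_recl; move: c1; rewrite big_ord_recl.
set s := \sum_(i < k) c (lift ord0 i) => c1.
have s0 : 0 <= s by apply: sumr_ge0.
have [s_eq0|s_neq0] := eqVneq s 0.
  have c_eq0 i : c (lift ord0 i) = 0 by apply: (psumr_eq0P _ s_eq0).
  rewrite big1 => [|i _]; last by rewrite c_eq0 scale0r.
  by move: c1; rewrite s_eq0 addr0 => ->; rewrite scale1r addr0.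
have -> : c ord0 = 1 - s by rewrite -c1 addrK.
have -> : \sum_i c (lift ord0 i) *: p (lift ord0 i) =
    s *: \sum_i (c (lift ord0 i) / s) *: p (lift ord0 i).
  by rewrite scaler_sumr; apply: eq_bigr => i _; rewrite scalerA mulrC divfK.
rewrite addrC; apply: conv_convex; last by rewrite s0 -c1 lerDr c0.
  apply: IHk => [i||i]; [exact: divr_ge0 | by rewrite -mulr_suml mulfV | exact: Tp].
exact: Tp.
Qed.

Lemma conv_all_eq S x y :
  (forall u v, S u -> S v -> u = v) -> conv S x -> conv S y -> x = y.
Proof.
move=> S_eq; suff conv_S z : conv S z -> S z.
  by move=> /conv_S Sx /conv_S Sy; apply: S_eq.
move=> [k [c [p [c0 c1 Sp ->]]]]; have [l0 _] := sumr_eq1_exists_neq0 c1.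
rewrite (eq_bigr (fun l => c l *: p l0)) => [|l _]; last by rewrite (S_eq _ _ (Sp l) (Sp l0)).
by rewrite -scaler_suml c1 scale1r.
Qed.

Lemma polytope_convex P x : polytope P -> conv P x -> P x.
Proof. by move=> [V [_ PV]] Px; apply/PV; apply: conv_idem Px => y /PV. Qed.

Lemma conv_row_mx k (v : 'rV[R]_k) S y :
  conv S y -> conv (fun z => exists2 u, S u & z = row_mx u v) (row_mx y v).
Proof.
move=> [l [c [p [c0 c1 Sp ->]]]]; exists l, c, (fun i => row_mx (p i) v).
by split=> // [i|]; [exists (p i) | rewrite sum_row_mx -scaler_suml c1 scale1r].
Qed.

Lemma conv_seg_param a b x :
  conv (fun y => y = a \/ y = b) x -> exists t, x = a + t *: (b - a).
Proof.
move=> [k [c [q [c0 c1 Sq ->]]]]; exists (\sum_l c l * (q l == b)%:R).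
have qE l : q l = a + (q l == b)%:R *: (b - a).
  case: (Sq l) => ->; last by rewrite eqxx scale1r addrC subrK.
  by case: eqP => [->|_]; rewrite ?subrr ?scaler0 ?scale0r addr0.
under eq_bigr => l _ do rewrite qE scalerDr scalerA.
by rewrite big_split /= -scaler_suml c1 scale1r scaler_suml.
Qed.

Lemma adim_eqv P Q d : set_eqv P Q -> adim Q d -> adim P d.
Proof.
move=> PQ [[p [Qp p_indep]] Q_max]; split; first by exists p; split=> // i; apply/PQ.
by move=> q Pq; apply: Q_max => i; apply/PQ.
Qed.

End Convexity.

Section AffineIndependence.
Variables (R : realFieldType) (m : nat).

Lemma aff_indep_weights N (p : 'I_N -> 'rV[R]_m) (w w' : 'I_N -> R) :
  aff_indep p -> \sum_j w j = \sum_j w' j ->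
  \sum_j w j *: p j = \sum_j w' j *: p j -> w =1 w'.
Proof.
move=> p_indep ws wp j; apply/eqP; rewrite -subr_eq0; apply/eqP; move: j.
apply: p_indep; first by rewrite sumrB ws subrr.
by under eq_bigr do rewrite scalerBl; rewrite sumrB wp subrr.
Qed.

Lemma aff_indep_inj N (p : 'I_N -> 'rV[R]_m) : aff_indep p -> injective p.
Proof.
move=> p_indep i j pij.
have := aff_indep_weights (w := fun l => (l == i)%:R) (w' := fun l => (l == j)%:R) p_indep.
rewrite !sumr_delta1 !sumr_delta pij => /(_ erefl erefl i); rewrite eqxx.
by case: eqP => // _ /eqP; rewrite oner_eq0.
Qed.

Lemma aff_indep_inj_comp N N' (p : 'I_N -> 'rV[R]_m) (q : 'I_N' -> 'rV[R]_m)
    (h : 'I_N' -> 'I_N) :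
  injective h -> (forall k, q k = p (h k)) -> aff_indep p -> aff_indep q.
Proof.
move=> h_inj qE p_indep c c0 cq k.
pose d l := \sum_(k | h k == l) c k.
have dE k' : d (h k') = c k' by rewrite /d (big_pred1 k') // => k''; rewrite /= inj_eq.
rewrite -dE; apply: p_indep; first by apply: etrans c0; rewrite [RHS](partition_big h predT).
apply: etrans cq; rewrite [RHS](partition_big h predT) //=; apply: eq_bigr => l _.
by rewrite scaler_suml; apply: eq_bigr => k' /eqP <-; rewrite qE.
Qed.

Lemma aff_indep_extreme N (p : 'I_N -> 'rV[R]_m) S j :
  aff_indep p -> (forall y, S y -> conv (fun z => exists i, z = p i) y) ->
  conv S (p j) -> S (p j).
Proof.
move=> p_indep Sp [k [c [s [c0 c1 Ss pj]]]].
have [w ws] := fin_all_exists (fun l => conv_range_weights (Sp _ (Ss l))).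
have w0 l i : 0 <= w l i by case: (ws l).
have w1 l : \sum_i w l i = 1 by case: (ws l).
have sE l : s l = \sum_i w l i *: p i by case: (ws l).
(* By uniqueness of barycentric coordinates, the mixture of the s l that
   gives p j can only charge the s l equal to p j. *)
have cw : (fun i => \sum_l c l * w l i) =1 (fun i => (i == j)%:R).
  apply: (aff_indep_weights p_indep).
    rewrite sumr_delta1 exchange_big /= -c1; apply: eq_bigr => l _.
    by rewrite -mulr_sumr w1 mulr1.
  rewrite sumr_delta pj; under [RHS]eq_bigr => l _ do rewrite sE scaler_sumr.
  rewrite [RHS]exchange_big; apply: eq_bigr => i _.
  by rewrite scaler_suml; apply: eq_bigr => l _; rewrite scalerA.
have [l0 cl0] := sumr_eq1_exists_neq0 c1.
have wl0 i : i != j -> w l0 i = 0.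
  move=> ij; have := cw i; rewrite /= (negbTE ij) => cw_eq0.
  have /eqP := @psumr_eq0P _ _ _ _ (fun l _ => mulr_ge0 (c0 l) (w0 l i)) cw_eq0 l0 isT.
  by rewrite mulf_eq0 (negbTE cl0) => /eqP.
have -> : p j = s l0.
  have wl0j : w l0 j = 1.
    by rewrite -(w1 l0) (bigD1 j) //= big1 ?addr0 // => i /wl0.
  by rewrite sE (bigD1 j) //= big1 ?addr0 ?wl0j ?scale1r // => i /wl0 ->; rewrite scale0r.
exact: Ss.
Qed.

End AffineIndependence.

Section Segments.
Variables (R : realFieldType) (m : nat).

Lemma adim_conv2 (a b : 'rV[R]_m) : a != b -> adim (conv (fun y => y = a \/ y = b)) 1.
Proof.
move=> ab; split.
  exists (fun i : 'I_2 => if i == ord0 then a else b); split.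
    by move=> i; apply: mem_conv; case: eqP; [left|right].
  move=> c; rewrite !big_ord_recl !big_ord0 /= !addr0 => /eqP; rewrite addr_eq0 => /eqP c0.
  rewrite c0 scaleNr addrC -scalerBr => /eqP.
  rewrite scaler_eq0 subr_eq0 [b == a]eq_sym (negbTE ab) orbF.
  move=> /eqP c1 i; have [->|i0] := eqVneq i ord0; first by rewrite c0 c1 oppr0.
  suff -> : i = lift ord0 ord0 by [].
  by apply/val_inj; case: i i0 => [[|[|]]].
move=> p Pp p_indep.
have [t pt] := fin_all_exists (fun i => conv_seg_param (Pp i)).
pose i1 : 'I_3 := lift ord0 ord0; pose i2 : 'I_3 := lift ord0 (lift ord0 ord0).
have sum3 (V : zmodType) (F : 'I_3 -> V) : \sum_i F i = F ord0 + F i1 + F i2.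
  by rewrite !big_ord_recl big_ord0 addr0 addrA.
have t01 : t ord0 != t i1.
  by apply/eqP => t01; have /(aff_indep_inj p_indep) : p ord0 = p i1 by rewrite !pt t01.
(* An affine dependence of three points a + t_i (b - a) on a line. *)
pose c i := if i == ord0 then t i1 - t i2
            else if i == i1 then t i2 - t ord0 else t ord0 - t i1.
suff /eqP : c i2 = 0 by rewrite /c /= subr_eq0 (negbTE t01).
apply: p_indep; rewrite sum3 /c /=; first by ring.
by rewrite !pt; apply/rowP => k; rewrite !mxE; ring.
Qed.

Lemma row_free_diff_neq n (a b : 'I_n -> 'rV[R]_m) :
  row_free (\matrix_i (b i - a i)) -> forall i, a i != b i.
Proof.
move=> rf i; apply/eqP => ab.
have : delta_mx 0 i *m \matrix_i (b i - a i) = (0 : 'rV[R]_n) *m \matrix_i (b i - a i).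
  by rewrite mul0mx -rowE rowK ab subrr.
move/(row_free_inj rf)/rowP/(_ i); rewrite !mxE !eqxx => /eqP; by rewrite oner_eq0.
Qed.

Lemma segment_conv2 (P : 'rV[R]_m -> Prop) a b :
  polytope P -> set_eqv P (conv (fun x => x = a \/ x = b)) -> a != b -> segment P.
Proof. by move=> hP Pab ab; split=> //; apply: adim_eqv Pab (adim_conv2 ab). Qed.

End Segments.

Section Cayley.
Variables (R : realFieldType) (n : nat).
Implicit Types (P : 'I_n -> 'rV[R]_n -> Prop) (a b : 'I_n -> 'rV[R]_n).

Definition cayley_pts a b (k : 'I_(n + n)) : 'rV[R]_(n + n) :=
  match split k with
  | inl i => row_mx (a i) (std_basis R i)
  | inr i => row_mx (b i) (std_basis R i)
  end.

Lemma sum_cayley_pts a b (c : 'I_(n + n) -> R) :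
  \sum_k c k *: cayley_pts a b k =
  row_mx (\sum_i (c (lshift n i) *: a i + c (rshift n i) *: b i))
         (\row_i (c (lshift n i) + c (rshift n i))).
Proof.
rewrite big_split_ord /cayley_pts.
under eq_bigr do rewrite split_lshift.
under [X in _ + X = _]eq_bigr do rewrite split_rshift.
rewrite !sum_row_mx add_row_mx big_split; congr row_mx.
rewrite -big_split [RHS]row_sum_delta; apply: eq_bigr => i _.
by rewrite mxE scalerDl.
Qed.

Lemma aff_indep_cayley_pts a b :
  aff_indep (cayley_pts a b) <-> row_free (\matrix_i (b i - a i)).
Proof.
set M := \matrix_i (b i - a i).
have MP (v : 'rV_n) : v *m M = \sum_i v 0 i *: (b i - a i).
  by rewrite mulmx_sum_row; apply: eq_bigr => i _; rewrite rowK.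
split=> [pts_indep | rf c _].
  apply/inj_row_free => v vM0.
  pose c k := match split k with inl i => - v 0 i | inr i => v 0 i end.
  have cl i : c (lshift n i) = - v 0 i by rewrite /c split_lshift.
  have cr i : c (rshift n i) = v 0 i by rewrite /c split_rshift.
  have c0 k : c k = 0.
    apply: pts_indep.
      rewrite big_split_ord; under eq_bigr do rewrite cl.
      by under [X in _ + X = _]eq_bigr do rewrite cr; rewrite sumrN addNr.
    rewrite sum_cayley_pts -row_mx0; congr row_mx.
      apply: etrans _ vM0; rewrite MP; apply: eq_bigr => i _.
      by rewrite cl cr scaleNr addrC scalerBr.
    by apply/rowP => i; rewrite !mxE cl cr addNr.
  by apply/rowP => i; rewrite mxE -cr c0.
rewrite sum_cayley_pts -row_mx0 => /eq_row_mx[ab0 /rowP e0].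
have cl i : c (lshift n i) = - c (rshift n i).
  by apply/eqP; rewrite -addr_eq0; move: (e0 i); rewrite !mxE => ->.
have cr i : c (rshift n i) = 0.
  have : (\row_i c (rshift n i)) *m M = 0 *m M.
    rewrite mul0mx MP; apply: etrans _ ab0; apply: eq_bigr => j _.
    by rewrite mxE cl scaleNr scalerBr addrC.
  by move/(row_free_inj rf)/rowP/(_ i); rewrite !mxE.
by move=> k; rewrite -[k]splitK; case: split => i /=; rewrite ?cl cr ?oppr0.
Qed.

Lemma cayley_gen P i x : P i x -> cayley P (row_mx x (std_basis R i)).
Proof. by move=> Px; apply: mem_conv; exists i, x. Qed.

Lemma cayley_eqv_conv_pts P a b :
  (forall i, set_eqv (P i) (conv (fun x => x = a i \/ x = b i))) ->
  set_eqv (cayley P) (conv (fun z => exists k, z = cayley_pts a b k)).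
Proof.
move=> Pab z; split.
  apply: conv_idem => _ [i [x [/Pab ab_x ->]]].
  apply: conv_sub (conv_row_mx (std_basis R i) ab_x) => _ [u [->|->] ->].
    by exists (lshift n i); rewrite /cayley_pts split_lshift.
  by exists (rshift n i); rewrite /cayley_pts split_rshift.
apply: conv_sub => _ [k ->]; rewrite /cayley_pts; case: split => i.
  by exists i, (a i); split=> //; apply/Pab/mem_conv; left.
by exists i, (b i); split=> //; apply/Pab/mem_conv; right.
Qed.

End Cayley.

Section CayleySimplex.
Variables (R : realFieldType) (n : nat) (P : 'I_n -> 'rV[R]_n -> Prop).
Variables (N : nat) (p : 'I_N -> 'rV[R]_(n + n)).
Hypotheses (p_indep : aff_indep p)
  (cayleyE : set_eqv (cayley P) (conv (fun z => exists j, z = p j))).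

Lemma cayley_simplex_vertex j : exists i x, P i x /\ p j = row_mx x (std_basis R i).
Proof.
apply: (aff_indep_extreme
  (S := fun z => exists i x, P i x /\ z = row_mx x (std_basis R i)) p_indep).
  by move=> y Sy; apply/cayleyE/mem_conv.
by apply/cayleyE/mem_conv; exists j.
Qed.

Variables (sg : 'I_N -> 'I_n) (X : 'I_N -> 'rV[R]_n).
Hypotheses (PX : forall j, P (sg j) (X j))
  (pE : forall j, p j = row_mx (X j) (std_basis R (sg j))).

Lemma cayley_fiber i x : P i x -> conv (fun y => exists2 j, sg j = i & y = X j) x.
Proof.
move=> /cayley_gen/cayleyE/conv_range_weights[w [w0 w1]].
under eq_bigr do rewrite pE.
rewrite sum_row_mx => /eq_row_mx[-> /rowP/(_ i)]; rewrite /std_basis !mxE summxE /=.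
under eq_bigr do rewrite !mxE /=; rewrite eqxx => wi.
(* The e_i-coordinate forces all the weight onto the vertices over e_i. *)
have w_fiber j : sg j != i -> w j = 0.
  have ge0 k : true -> 0 <= w k * (1 - (i == sg k)%:R).
    by move=> _; rewrite mulr_ge0 //; case: eqP; rewrite ?subrr ?subr0.
  have : \sum_k w k * (1 - (i == sg k)%:R) = 0.
    by under eq_bigr do rewrite mulrBr mulr1; rewrite sumrB w1 -wi subrr.
  move=> /(psumr_eq0P ge0)/(_ j isT) + sgj.
  by rewrite eq_sym (negbTE sgj) subr0 mulr1.
apply: conv_support => // j wj; exists j => //.
by apply: contraTeq wj => /w_fiber ->; rewrite eqxx.
Qed.

Lemma cayley_fiber_pair (fm : fully_mixed P) i :
  exists l : 'I_N * 'I_N, [/\ sg l.1 = i, sg l.2 = i & X l.1 != X l.2].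
Proof.
have [d [d_ge1 [[u [Pu u_indep]] _]]] := fm i.
have u01 : u ord0 != u (Ordinal (d_ge1 : 1 < d.+1)%N).
  by rewrite (inj_eq (aff_indep_inj u_indep)).
case: (pickP [pred l : 'I_N * 'I_N | [&& sg l.1 == i, sg l.2 == i & X l.1 != X l.2]]).
  by move=> l /and3P[/eqP sg1 /eqP sg2 X12]; exists l.
move=> no_pair; case/eqP: u01.
apply: conv_all_eq (cayley_fiber (Pu _)) (cayley_fiber (Pu _)).
move=> _ _ [j1 sg1 ->] [j2 sg2 ->]; apply/eqP.
by move: (no_pair (j1, j2)); rewrite /= sg1 sg2 eqxx => /negbFE.
Qed.

Lemma cayley_simplex_segments (hP : forall i, polytope (P i)) (fm : fully_mixed P)
    (N_le : (N <= n + n)%N) :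
  exists a b : 'I_n -> 'rV[R]_n,
    (forall i, set_eqv (P i) (conv (fun x => x = a i \/ x = b i))) /\
    row_free (\matrix_i (b i - a i)).
Proof.
have [l lP] := fin_all_exists (cayley_fiber_pair fm).
pose a i := X (l i).1; pose b i := X (l i).2.
have sg1 i : sg (l i).1 = i by case: (lP i).
have sg2 i : sg (l i).2 = i by case: (lP i).
have ab i : a i != b i by case: (lP i).
pose h k := match split k with inl i => (l i).1 | inr i => (l i).2 end.
have h_inj : injective h.
  move=> k k'; rewrite /h => e; apply: (can_inj splitK); move: e.
  case: split => i; case: split => i' e; have := congr1 sg e;
    rewrite ?sg1 ?sg2 => ii'; subst i' => //.
    by case/eqP: (ab i); rewrite /a /b e.
  by case/eqP: (ab i); rewrite /a /b e.
(* Injective between index sets of size 2n, h is onto: there is no third vertex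
   over any e_i. *)
have X_fiber j : X j = a (sg j) \/ X j = b (sg j).
  have card_le : (#|'I_N| <= #|'I_(n + n)|)%N by rewrite !card_ord.
  have /codomP[k ->] := inj_card_onto h_inj card_le j.
  by rewrite /h; case: split => i; [left; rewrite sg1 | right; rewrite sg2].
exists a, b; split=> [i x|].
  split=> [/cayley_fiber | ab_x].
    by apply: conv_sub => _ [j <- ->]; apply: X_fiber.
  apply: polytope_convex (hP i) _; apply: conv_sub ab_x => _ [->|->].
    by move: (PX (l i).1); rewrite sg1.
  by move: (PX (l i).2); rewrite sg2.
apply/aff_indep_cayley_pts; apply: aff_indep_inj_comp h_inj _ p_indep => k.
by rewrite /cayley_pts /h; case: split => i; rewrite pE ?sg1 ?sg2.
Qed.

End CayleySimplex.

Unset Implicit Arguments.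

Theorem lemma2p4 (R : realFieldType) (n : nat) (n_gt0 : (0 < n)%N)
    (P : 'I_n -> 'rV[R]_n -> Prop) (hP : forall i, polytope (P i)) :
  (fully_mixed P /\ simplex (2 * n).-1 (cayley P)) <->
  ((forall i, segment (P i)) /\
   exists a b : 'I_n -> 'rV[R]_n,
     (forall i, set_eqv (P i) (conv (fun x => x = a i \/ x = b i))) /\
     row_free (\matrix_(i < n) (b i - a i))).
Proof.
have N_eq : ((2 * n).-1.+1 = n + n)%N by rewrite prednK ?muln_gt0 // mul2n addnn.
split=> [[fm [p [p_indep cayleyE]]] | [_ [a [b [Pab rf]]]]].
  have [sg /fin_all_exists[X vertexE]] :=
    fin_all_exists (cayley_simplex_vertex p_indep cayleyE).
  have [a [b [Pab rf]]] := cayley_simplex_segments p_indep cayleyE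
    (fun j => (vertexE j).1) (fun j => (vertexE j).2) hP fm (eq_leq N_eq).
  split=> [i|]; last by exists a, b.
  exact: segment_conv2 (hP i) (Pab i) (row_free_diff_neq rf i).
split=> [i|].
  by exists 1%N; split=> //; apply: adim_eqv (Pab i) (adim_conv2 (row_free_diff_neq rf i)).
exists (fun j => cayley_pts a b (cast_ord N_eq j)); split.
  exact: aff_indep_inj_comp (@cast_ord_inj _ _ N_eq) _ ((aff_indep_cayley_pts a b).2 rf).
move=> z; rewrite (cayley_eqv_conv_pts Pab z); split; apply: conv_sub => _ [k ->].
  by exists (cast_ord (esym N_eq) k); rewrite cast_ordKV.
by exists (cast_ord N_eq k).
Qed.
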